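(* For all integers $i,j$ the following hold (whenever every triple $(m',n',k')$ appearing as a subscript satisfies $m',n'\ge0$ and $0\le k'\le\min(m',n')$, as guaranteed by the stated hypotheses): (1) If $1\le k\le m-1$ and $k\le n$: $c_{m,n,k}(i,j)=c_{m-1,n,k}(i,j)+c_{m-1,n-1,k-1}(i,j-1)$. (2) If $1\le k\le m$ and $k\le n-1$: $c_{m,n,k}(i,j)=c_{m,n-1,k}(i,j)-c_{m-1,n-1,k-1}(i-1,j)$. (3) If $0\le k\le\min(m-1,n-1)$ and $i+j>k$: $c_{m,n,k}(i,j)=c_{m-1,n,k}(i-1,j)+c_{m,n-1,k}(i,j-1)$. (4) If $0\le k\le\min(m,n)-1$ and $i+j>k$: $c_{m,n,k}(i,j)=c_{m+1,n,k+1}(i,j)-c_{m,n+1,k+1}(i,j)$.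
   Context: Binomial coefficients $\binom{a}{b}$ equal $\frac{a!}{b!(a-b)!}$ when $0\le b\le a$ and $0$ otherwise. For integers $m,n\ge0$, $0\le k\le\min(m,n)$ and arbitrary integers $i,j$, define $c_{m,n,k}(i,j)=\sum_{l=0}^{k}(-1)^l\binom{i+j-k}{i-l}\binom{m-l}{k-l}\binom{n-k+l}{l}$ if $i+j\ge k$, and $c_{m,n,k}(i,j)=0$ if $i+j<k$. Equivalently, for $i+j\ge k$, $c_{m,n,k}(i,j)$ is the coefficient of $x^jy^i$ in $(x+y)^{i+j-k}(1-x)^{-(m-k+1)}(1+y)^{-(n-k+1)}$. (For $0\le i\le m$, $0\le j\le n$, $k\le i+j\le m+n-k$, this is the coordinate of $f^i\phi_m\otimes f^j\phi_n$ in the weight vector $f^{i+j-k}\phi_{m,n,k}$ of the copy of $V(m+n-2k)$ in $V(m)\otimes V(n)$ generated by the highest weight vector $\phi_{m,n,k}=\sum_{l=0}^{k}(-1)^l\binom{m-l}{k-l}\binom{n-k+l}{l} f^l\phi_m\otimes f^{k-l}\phi_n$.) *)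

From HB Require Import structures.
From mathcomp Require Import all_boot all_order all_algebra.
Set Implicit Arguments. Unset Strict Implicit. Unset Printing Implicit Defensive.
Import Order.TTheory GRing.Theory Num.Theory.
Local Open Scope ring_scope.

Definition binomZ (a b : int) : int :=
  if (0 <= b) && (b <= a) then ('C(`|a|%N, `|b|%N))%:Z else 0.

Definition cmnk (m n k : nat) (i j : int) : int :=
  if (k%:Z <= i + j) then
    \sum_(l < k.+1)
      (-1) ^+ l * binomZ (i + j - k%:Z) (i - l%:Z)
                * binomZ (m%:Z - l%:Z) (k%:Z - l%:Z)
                * binomZ (n%:Z - k%:Z + l%:Z) l%:Z
  else 0.

From HB Require Import structures.
From mathcomp Require Import all_boot all_order all_algebra.
From mathcomp Require Import zify ring.
Import Order.TTheory GRing.Theory Num.Theory.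
Local Open Scope ring_scope.

(* Pascal's rule applied to the factor involving [m] gives (1),
   applied to the factor involving [n] it gives (2) after the index shift
   [l -> l + 1], and applied to the factor involving [i + j] it splits
   [c_{m,n,k}(i,j)] into two sums at total degree [i + j - 1]; combining this
   split with (1) and (2) gives (3), and (4) follows from (1) for
   [c_{m+1,n,k+1}], (2) for [c_{m,n+1,k+1}] and (3).  The boundary
   terms created by these manipulations vanish because a binomial coefficient
   with negative lower index is zero. *)

Lemma binomZ_lt0 (a b : int) : b < 0 -> binomZ a b = 0.
Proof. by move=> b_lt0; rewrite /binomZ; case: ifP => //; lia. Qed.

Lemma binomZ_nat (p q : nat) : binomZ p q = ('C(p, q))%:Z.
Proof.
rewrite /binomZ /=; case: ifP => // /negbT qp.
by rewrite bin_small //; lia.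
Qed.

Lemma binomZ_pascal (a b : int) : 0 < a ->
  binomZ a b = binomZ (a - 1) b + binomZ (a - 1) (b - 1).
Proof.
case: a => [[|p]|p] // _.
have -> : Posz p.+1 - 1 = p by lia.
case: b => [[|q]|q].
- by rewrite (@binomZ_lt0 _ (0 - 1)) // addr0 !binomZ_nat !bin0.
- have -> : Posz q.+1 - 1 = q by lia.
  by rewrite !binomZ_nat binS PoszD.
- by rewrite !binomZ_lt0 //; lia.
Qed.

Definition cterm (m n k s i : int) (l : nat) : int :=
  (-1) ^+ l * binomZ (s - k) (i - l%:Z) * binomZ (m - l%:Z) (k - l%:Z)
            * binomZ (n - k + l%:Z) l%:Z.

Definition csum (m n k : nat) (s i : int) : int :=
  \sum_(l < k.+1) cterm m n k s i l.

Lemma cmnkE (m n k : nat) (i j : int) :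
  cmnk m n k i j = if k%:Z <= i + j then csum m n k (i + j) i else 0.
Proof. by []. Qed.

Lemma cterm_gt (m n k s i : int) (l : nat) : k < l%:Z -> cterm m n k s i l = 0.
Proof. by move=> kl; rewrite /cterm (@binomZ_lt0 _ (k - l%:Z)) ?mulr0 ?mul0r //; lia. Qed.

Lemma csum_widen (m n k : nat) (s i : int) :
  \sum_(l < k.+2) cterm m n k s i l = csum m n k s i.
Proof. by rewrite big_ord_recr /= cterm_gt ?addr0 //; lia. Qed.

Lemma csum0 (m n : nat) (s i : int) : csum m n 0 s i = binomZ s i.
Proof.
rewrite /csum big_ord1 /cterm /= expr0 mul1r.
have -> : m%:Z - 0%:Z = m by lia.
have -> : n%:Z - 0%:Z + 0%:Z = n by lia.
by rewrite !subr0 !binomZ_nat !bin0 !mulr1.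
Qed.

Lemma cterm_recm (m n k : nat) (s i : int) (l : nat) : (l <= m)%N ->
  cterm m.+1 n.+1 k.+1 s i l = cterm m n.+1 k.+1 s i l + cterm m n k (s - 1) i l.
Proof.
move=> lm; rewrite /cterm (@binomZ_pascal (m.+1%:Z - l%:Z)); last lia.
have -> : m.+1%:Z - l%:Z - 1 = m%:Z - l%:Z by lia.
have -> : k.+1%:Z - l%:Z - 1 = k%:Z - l%:Z by lia.
have -> : n.+1%:Z - k.+1%:Z = n%:Z - k%:Z by lia.
have -> : s - 1 - k%:Z = s - k.+1%:Z by lia.
ring.
Qed.

Lemma cterm_recn0 (m n k : nat) (s i : int) : (k < n)%N ->
  cterm m.+1 n.+1 k.+1 s i 0 = cterm m.+1 n k.+1 s i 0.
Proof.
move=> kn; rewrite /cterm.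
have -> : n.+1%:Z - k.+1%:Z + 0%:Z = (n - k)%N by lia.
have -> : n%:Z - k.+1%:Z + 0%:Z = (n - k.+1)%N by lia.
by rewrite !binomZ_nat !bin0.
Qed.

Lemma cterm_recnS (m n k : nat) (s i : int) (l : nat) : (k < n)%N ->
  cterm m.+1 n.+1 k.+1 s i l.+1
  = cterm m.+1 n k.+1 s i l.+1 - cterm m n k (s - 1) (i - 1) l.
Proof.
move=> kn; rewrite /cterm (@binomZ_pascal (n.+1%:Z - k.+1%:Z + l.+1%:Z)); last lia.
have -> : n.+1%:Z - k.+1%:Z + l.+1%:Z - 1 = n%:Z - k.+1%:Z + l.+1%:Z by lia.
have -> : l.+1%:Z - 1 = l%:Z by lia.
have -> : n%:Z - k.+1%:Z + l.+1%:Z = n%:Z - k%:Z + l%:Z by lia.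
have -> : s - 1 - k%:Z = s - k.+1%:Z by lia.
have -> : i - 1 - l%:Z = i - l.+1%:Z by lia.
have -> : m%:Z - l%:Z = m.+1%:Z - l.+1%:Z by lia.
have -> : k%:Z - l%:Z = k.+1%:Z - l.+1%:Z by lia.
rewrite exprS; ring.
Qed.

Lemma cterm_recs (m n k s i : int) (l : nat) : k < s ->
  cterm m n k s i l = cterm m n k (s - 1) (i - 1) l + cterm m n k (s - 1) i l.
Proof.
move=> ks; rewrite /cterm (@binomZ_pascal (s - k)); last lia.
have -> : s - k - 1 = s - 1 - k by lia.
have -> : i - l%:Z - 1 = i - 1 - l%:Z by lia.
ring.
Qed.

Lemma csum_recm (m n k : nat) (s i : int) : (k < m)%N ->
  csum m.+1 n.+1 k.+1 s i = csum m n.+1 k.+1 s i + csum m n k (s - 1) i.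
Proof.
move=> km; rewrite -(csum_widen m n k) /csum -big_split /=.
apply: eq_bigr => l _; apply: cterm_recm.
by have := ltn_ord l; lia.
Qed.

Lemma csum_recn (m n k : nat) (s i : int) : (k < n)%N ->
  csum m.+1 n.+1 k.+1 s i = csum m.+1 n k.+1 s i - csum m n k (s - 1) (i - 1).
Proof.
move=> kn; rewrite /csum (big_ord_recl k.+1) [\sum_(l < k.+2) _]big_ord_recl.
rewrite cterm_recn0 // -addrA -sumrB; congr (_ + _).
by apply: eq_bigr => l _; rewrite cterm_recnS.
Qed.

Lemma csum_recs (m n k : nat) (s i : int) : k%:Z < s ->
  csum m n k s i = csum m n k (s - 1) (i - 1) + csum m n k (s - 1) i.
Proof. by move=> ks; rewrite /csum -big_split; apply: eq_bigr => l _; apply: cterm_recs. Qed.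

Lemma csum_recmn (m n k : nat) (s i : int) :
  (k <= m)%N -> (k <= n)%N -> k%:Z < s ->
  csum m.+1 n.+1 k s i = csum m n.+1 k (s - 1) (i - 1) + csum m.+1 n k (s - 1) i.
Proof.
case: k => [|k] km kn ks.
  by rewrite !csum0 addrC binomZ_pascal.
by rewrite csum_recs // csum_recm // csum_recn //; ring.
Qed.

Lemma lez_subr1 (k : nat) (s : int) : (k%:Z <= s - 1) = (k.+1%:Z <= s).
Proof. by apply/idP/idP; lia. Qed.

Lemma cmnk_recm (m n k : nat) (i j : int) : (k < m)%N ->
  cmnk m.+1 n.+1 k.+1 i j = cmnk m n.+1 k.+1 i j + cmnk m n k i (j - 1).
Proof.
move=> km; rewrite !cmnkE addrA lez_subr1.
by case: ifP => _; rewrite ?csum_recm ?addr0.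
Qed.

Lemma cmnk_recn (m n k : nat) (i j : int) : (k < n)%N ->
  cmnk m.+1 n.+1 k.+1 i j = cmnk m.+1 n k.+1 i j - cmnk m n k (i - 1) j.
Proof.
move=> kn; rewrite !cmnkE addrAC lez_subr1.
by case: ifP => _; rewrite ?csum_recn ?subr0.
Qed.

Lemma cmnk_recmn (m n k : nat) (i j : int) :
  (k <= m)%N -> (k <= n)%N -> k%:Z < i + j ->
  cmnk m.+1 n.+1 k i j = cmnk m n.+1 k (i - 1) j + cmnk m.+1 n k i (j - 1).
Proof.
move=> km kn ks; rewrite !cmnkE addrAC addrA !ifT; try lia.
exact: csum_recmn.
Qed.

Theorem proposition7p3 (i j : int) :
  (forall m n k : nat, (1 <= k)%N -> (k <= m - 1)%N -> (k <= n)%N ->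
     cmnk m n k i j = cmnk (m - 1) n k i j + cmnk (m - 1) (n - 1) (k - 1) i (j - 1))
  /\
  (forall m n k : nat, (1 <= k)%N -> (k <= m)%N -> (k <= n - 1)%N ->
     cmnk m n k i j = cmnk m (n - 1) k i j - cmnk (m - 1) (n - 1) (k - 1) (i - 1) j)
  /\
  (forall m n k : nat, (k <= minn (m - 1) (n - 1))%N -> (1 <= minn m n)%N ->
     k%:Z < i + j ->
     cmnk m n k i j = cmnk (m - 1) n k (i - 1) j + cmnk m (n - 1) k i (j - 1))
  /\
  (forall m n k : nat, (k <= minn m n - 1)%N -> (1 <= minn m n)%N ->
     k%:Z < i + j ->
     cmnk m n k i j = cmnk m.+1 n k.+1 i j - cmnk m n.+1 k.+1 i j).
Proof.
split; [|split; [|split]].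
- move=> [|m] [|n] [|k] // _; rewrite !subn1 /= => km _.
  exact: cmnk_recm.
- move=> [|m] [|n] [|k] // _; rewrite !subn1 /= => _ kn.
  exact: cmnk_recn.
- move=> [|m] [|n] k //; rewrite !subn1 /= => kmn _ ks.
  apply: cmnk_recmn => //; lia.
- move=> [|m] [|n] k //; rewrite !subn1 /= => kmn _ ks.
  by rewrite (cmnk_recm m.+1 n k) ?(cmnk_recn m n.+1 k) ?(cmnk_recmn m n k); lia.
Qed.
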